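(* Let $p$ be an odd prime. If $\lambda$ is a nonempty BG-partition, then $\lambda^{(1)*}$ is a BG-partition; i.e. removing the $p$-rim* of a BG-partition yields a BG-partition.
   Context: Partitions: $\lambda=(\lambda_1\ge\lambda_2\ge\cdots)$ with finitely many nonzero parts; $l(\lambda)$ = number of nonzero parts; Young diagram $[\lambda]=\{(i,j): i\ge1, 1\le j\le\lambda_i\}$ ($i$ = row, increasing downward). $\lambda'$ is the conjugate; self-conjugate means $\lambda=\lambda'$. $k(\lambda)=\max\{i:\lambda_i\ge i\}$; hook length $h_{ij}=\lambda_i+\lambda'_j-i-j+1$. A BG-partition is a self-conjugate partition with $p\nmid h_{ii}$ for all $1\le i\le k(\lambda)$ (the empty partition counts as one). Rim and $p$-rim: the rim is the set of nodes $(i,j)\in[\lambda]$ with $(i+1,j+1)\notin[\lambda]$. Label rim nodes $1,2,\dots$ along the rim path from $(1,\lambda_1)$ to $(l(\lambda),1)$. The first $p$-segment is the rim nodes labelled $1,\dots,p$ (or all if fewer). If the last node $(i,j)$ of a $p$-segment lies in the last row, stop; otherwise with $l$ the smallest label in row $i+1$ the next $p$-segment is the rim nodes labelled $l,\dots,l+p-1$ (or up to the last). The $p$-rim is the union of the $p$-segments. $p$-rim*: $U_\lambda=\{(i,j)\in p\text{-rim of }\lambda: i\le j\}$, $L_\lambda=\{(j,i):(i,j)\in U_\lambda\}$, $\mathrm{Rim}^*_p(\lambda)=U_\lambda\cup L_\lambda$. $\lambda^{(1)*}$ is the partition with Young diagram $[\lambda]\setminus\mathrm{Rim}^*_p(\lambda)$.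 *)

(* Partitions are represented as sequences of their nonzero
   parts lam = [:: lam_1; lam_2; ...]; nodes (i,j) are 1-indexed (row i, column j). *)
From mathcomp Require Import all_boot.
Set Implicit Arguments. Unset Strict Implicit. Unset Printing Implicit Defensive.

(* lam_i, 1-indexed; 0 beyond the length *)
Definition part (lam : seq nat) (i : nat) : nat := nth 0 lam i.-1.

Definition is_partition (lam : seq nat) : bool :=
  sorted geq lam && all (fun x => 0 < x) lam.

Definition in_diag (lam : seq nat) (x : nat * nat) : bool :=
  [&& 1 <= x.1, x.1 <= size lam, 1 <= x.2 & x.2 <= part lam x.1].

Definition conj_part (lam : seq nat) : seq nat :=
  mkseq (fun j => count (fun x => j.+1 <= x) lam) (head 0 lam).

Definition self_conjugate (lam : seq nat) : bool := conj_part lam == lam.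

Definition kdiag (lam : seq nat) : nat :=
  \max_(i < (size lam).+1 | i <= part lam i) i.

Definition hook (lam : seq nat) (i j : nat) : nat :=
  part lam i + part (conj_part lam) j + 1 - i - j.

Definition BG (p : nat) (lam : seq nat) : Prop :=
  [/\ is_partition lam, self_conjugate lam &
      forall i, 1 <= i <= kdiag lam -> ~~ (p %| hook lam i i)].

(* rim nodes in rim-path order from (1, lam_1) to (l(lam), 1):
   row i contributes columns lam_i, lam_i - 1, ..., max(1, lam_{i+1}) *)
Definition rim (lam : seq nat) : seq (nat * nat) :=
  flatten [seq [seq (i, j) | j <- rev (iota (maxn 1 (part lam i.+1))
                                     ((part lam i).+1 - maxn 1 (part lam i.+1)))]
          | i <- iota 1 (size lam)].

(* sanity: membership in [rim lam] coincides with the defining property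
   (i,j) in [lam] and (i+1,j+1) not in [lam] (not used in the statement) *)
Definition in_rim (lam : seq nat) (x : nat * nat) : bool :=
  in_diag lam x && ~~ in_diag lam (x.1.+1, x.2.+1).

(* p-segments: starting at position s (0-indexed label s+1), take the rim
   nodes with labels s+1, ..., s+p (or up to the last one); if the last node
   lies in the last row, stop, otherwise restart at the smallest label in the
   next row. *)
Fixpoint prim_aux (p : nat) (lam : seq nat) (fuel s : nat) : seq (nat * nat) :=
  match fuel with
  | 0 => [::]
  | fuel'.+1 =>
      let seg := take p (drop s (rim lam)) in
      if seg is [::] then [::] else
      let i := (last (0, 0) seg).1 in
      if size lam <= i then seg
      else seg ++ prim_aux p lam fuel' (find (fun x => x.1 == i.+1) (rim lam))
  end.

Definition p_rim (p : nat) (lam : seq nat) : seq (nat * nat) :=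
  prim_aux p lam (size (rim lam)).+1 0.

Definition in_U (p : nat) (lam : seq nat) (x : nat * nat) : bool :=
  (x \in p_rim p lam) && (x.1 <= x.2).

Definition in_rimstar (p : nat) (lam : seq nat) (x : nat * nat) : bool :=
  in_U p lam x || in_U p lam (x.2, x.1).

(* Removing Rim*_p from a self-conjugate [lam] leaves a symmetric set of cells;
   it is a Young diagram because, above the diagonal, the p-rim is closed under
   moving right along a row (p-segments start at first nodes of rows) and under
   passing from the last node of a row to the first node of the next one
   (either the current p-segment runs on, or it ends there and the next one
   starts there).  Below the diagonal use symmetry.
   For a diagonal cell (i, i) of the new partition mu, either mu_i = lam_i, or
   lam_{i+1} = mu_i + 1, or (i, mu_i + 1) ends a p-segment that starts at the
   first node of some row r, and counting rim labels gives
   lam_r - r = mu_i - i + p.  So 2 (mu_i - i) + 1 is congruent modulo 2p to a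
   diagonal hook of lam, which p does not divide. *)

From mathcomp Require Import all_boot zify.
Set Implicit Arguments. Unset Strict Implicit. Unset Printing Implicit Defensive.

Fact geq_trans : transitive geq.
Proof. exact: rev_trans leq_trans. Qed.

Lemma part_pos lam i : is_partition lam -> 0 < i <= size lam -> 0 < part lam i.
Proof.
case/andP=> _ /allP lam_gt0; case: i => [|i] //= i_lt; apply: lam_gt0.
by rewrite mem_nth.
Qed.

Lemma part_oversize lam i : size lam < i -> part lam i = 0.
Proof. by move=> lt_lam_i; rewrite /part nth_default //; lia. Qed.

Lemma part_nonincr lam i j : is_partition lam -> i <= j -> part lam j <= part lam i.
Proof.
case/andP=> lam_sorted _ le_ij.
have [j_lt|j_ge] := ltnP j.-1 (size lam); last by rewrite /part nth_default.
apply: (sorted_leq_nth geq_trans leqnn 0 lam_sorted); rewrite ?inE /=; lia.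
Qed.

Lemma part_le_head lam i : is_partition lam -> part lam i <= part lam 1.
Proof. by case: i => [|i] lam_part //; apply: part_nonincr. Qed.

Lemma leq_count_geq lam i j : is_partition lam -> 0 < i -> 0 < j ->
  (i <= count (fun x => j <= x) lam) = (i <= size lam) && (j <= part lam i).
Proof.
elim: lam i => [|x s IH] [|i] // xs_part _ j_gt0.
have s_part : is_partition s.
  by move: xs_part; rewrite /is_partition /= => /andP[/path_sorted -> /andP[_ ->]].
have /allP s_le_x : all (geq x) s.
  by case/andP: xs_part; rewrite /= (path_sortedE geq_trans) => /andP[].
have [le_jx|lt_xj] := leqP j x.
  case: i => [|i]; first by rewrite /part /=; lia.
  by rewrite /= le_jx add1n ltnS IH.
rewrite /= (leqNgt j x) lt_xj; have -> : count (fun y => j <= y) s = 0.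
  by apply/eqP; rewrite -leqn0 leqNgt -has_count; apply/hasP => -[y /s_le_x /= ? ?]; lia.
case: i => [|i]; first by rewrite /part /=; lia.
have [i_lt|i_ge] := ltnP i (size s); last by rewrite part_oversize /=; lia.
have /s_le_x : part s i.+1 \in s by rewrite /part mem_nth.
rewrite /part /=; lia.
Qed.

Lemma part_conj lam j : is_partition lam -> 0 < j ->
  part (conj_part lam) j = count (fun x => j <= x) lam.
Proof.
case: j => [|j] // lam_part _; rewrite /part /conj_part /=.
have [j_lt|j_ge] := ltnP j (head 0 lam); first by rewrite nth_mkseq.
rewrite nth_default ?size_mkseq //; apply/esym/eqP.
rewrite -leqn0 leqNgt -has_count; apply/hasP => -[y y_lam /= lt_jy].
have := part_le_head (index y lam).+1 lam_part; rewrite /part /= nth_index //.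
by case: lam {lam_part} y_lam j_ge => //= x s _; lia.
Qed.

Lemma leq_part_conj lam i j : is_partition lam -> 0 < i -> 0 < j ->
  (i <= part (conj_part lam) j) = (i <= size lam) && (j <= part lam i).
Proof. by move=> lam_part i_gt0 j_gt0; rewrite part_conj // leq_count_geq. Qed.

Lemma in_diag_sym lam i j : is_partition lam -> self_conjugate lam ->
  in_diag lam (i, j) = in_diag lam (j, i).
Proof.
move=> lam_part /eqP lam_sc; rewrite /in_diag /=.
case: i => [|i]; first by case: j => [|j]; rewrite ?andbF.
case: j => [|j]; first by rewrite /= !andbF.
rewrite /= -leq_part_conj // lam_sc.
by case: (leqP j.+1 (size lam)) => // lt_lam_j; rewrite part_oversize //; lia.
Qed.

Lemma leq_kdiag lam i : is_partition lam -> 0 < i ->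
  (i <= kdiag lam) = (i <= part lam i).
Proof.
move=> lam_part i_gt0; apply/idP/idP => [le_i_kdiag|le_ii].
  rewrite leqNgt; apply/negP => lt_ii.
  suff : kdiag lam <= i.-1 by lia.
  apply/bigmax_leqP => k /= le_kk; rewrite -ltnS prednK //; apply: contraLR le_kk.
  by rewrite -!leqNgt => le_ik; have := part_nonincr lam_part le_ik; lia.
have i_le : i < (size lam).+1.
  by rewrite ltnS leqNgt; apply: contraTN le_ii => /part_oversize ->; lia.
pose P (k : 'I_(size lam).+1) := k <= part lam k.
exact: (@leq_bigmax_cond _ P val (Ordinal i_le)).
Qed.

Lemma hook_diag lam i : self_conjugate lam -> i <= part lam i ->
  hook lam i i = 2 * (part lam i - i) + 1.
Proof. by move=> /eqP lam_sc le_ii; rewrite /hook lam_sc; lia. Qed.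

Lemma BG_diag_hooksP p lam : is_partition lam -> self_conjugate lam ->
  (forall i, 0 < i <= kdiag lam -> ~~ (p %| hook lam i i)) <->
  (forall i, 0 < i <= part lam i -> ~~ (p %| 2 * (part lam i - i) + 1)).
Proof.
move=> lam_part lam_sc; split=> hooks i /andP[i_gt0 le_i].
  by rewrite -hook_diag // hooks // i_gt0 leq_kdiag.
by rewrite leq_kdiag // in le_i; rewrite hook_diag // hooks ?i_gt0.
Qed.

Lemma downclosed_count (P : pred nat) B :
  (forall j, 0 < j -> P j.+1 -> P j) -> (forall j, P j -> 0 < j <= B) ->
  forall j, P j = (0 < j <= count P (iota 1 B)).
Proof.
move=> P_down; elim: B => [|B IH] P_bound j.
  by rewrite /=; apply/idP/idP => [/P_bound|]; lia.
have P_interval k : P k -> forall l, 0 < l <= k -> P l.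
  elim: k => [|k IHk] Pk l /andP[l_gt0 le_lk]; first lia.
  have [->|ne_lk] := eqVneq l k.+1; first done.
  by apply: IHk; [apply: P_down => //; lia | lia].
rewrite -[B.+1]addn1 iotaD count_cat /= addn0 add1n.
case PB: (P B.+1).
  have -> : count P (iota 1 B) = B.
    rewrite -[RHS](size_iota 1 B) -count_predT; apply: eq_in_count => k.
    by rewrite mem_iota => k_in; apply: (P_interval B.+1 PB); lia.
  apply/idP/idP => [/P_bound|j_le]; first lia.
  by apply: (P_interval B.+1 PB); lia.
rewrite addn0 IH // => k Pk; have := P_bound k Pk.
by case: (eqVneq k B.+1) => [eq_kB|ne_kB]; [rewrite eq_kB PB in Pk | lia].
Qed.

Lemma exists_partition_diag (S : pred (nat * nat)) B :
  (forall i j, S (i, j) -> (0 < i <= B) && (0 < j <= B)) ->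
  (forall i j, 0 < i -> S (i.+1, j) -> S (i, j)) ->
  (forall i j, 0 < j -> S (i, j.+1) -> S (i, j)) ->
  exists2 mu, is_partition mu & in_diag mu =1 S.
Proof.
move=> S_bound S_up S_left.
pose len i := count (fun j => S (i, j)) (iota 1 B).
have lenP i j : S (i, j) = (0 < j <= len i).
  by apply: downclosed_count => [k|k /S_bound]; [exact: S_left | lia].
pose n := count (fun i => S (i, 1)) (iota 1 B).
have nP i : S (i, 1) = (0 < i <= n).
  by apply: downclosed_count => [k|k /S_bound]; [exact: S_up | lia].
have len_nonincr i : len i.+2 <= len i.+1.
  rewrite leqNgt; apply/negP => lt_len.
  have : S (i.+2, len i.+2) by rewrite lenP; lia.
  by move/S_up; rewrite lenP; lia.
exists (mkseq (fun i => len i.+1) n).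
  apply/andP; split.
    rewrite sorted_map; apply: sub_sorted (iota_sorted 0 n) => i j.
    exact: (homo_leq (r := fun a b => b <= a) leqnn (fun _ _ _ h1 h2 => leq_trans h2 h1)).
  apply/allP => x /mapP[i]; rewrite mem_iota => i_lt ->.
  have : S (i.+1, 1) by rewrite nP; lia.
  by rewrite lenP.
case=> [[|i] j]; rewrite /in_diag size_mkseq /=.
  by apply/esym/negbTE/negP => /S_bound.
have [le_in|lt_ni] := leqP i.+1 n.
  by rewrite /part /= nth_mkseq ?lenP; lia.
apply/esym/negbTE/negP => Sij.
have j_gt0 : 0 < j by have := S_bound _ _ Sij; lia.
have : S (i.+1, 1) by rewrite lenP; move: Sij; rewrite lenP; lia.
by rewrite nP; lia.
Qed.

Lemma self_conjugate_sym mu : is_partition mu ->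
  (forall i j, in_diag mu (i, j) = in_diag mu (j, i)) -> self_conjugate mu.
Proof.
move=> mu_part mu_sym; apply/eqP.
have size_conj : size (conj_part mu) = size mu.
  rewrite /conj_part size_mkseq.
  case: mu mu_part mu_sym => [|x s] // mu_part mu_sym /=.
  have x_gt0 : 0 < x by case/andP: mu_part => _ /andP[].
  have last_gt0 : 0 < part (x :: s) (size s).+1 by apply: part_pos => /=.
  have := mu_sym 1 x; have := mu_sym (size s).+1 1.
  by rewrite /in_diag /part /= in last_gt0 *; lia.
apply: (@eq_from_nth _ 0) => // k; rewrite size_conj => k_lt.
have le_conj t : 0 < t -> (t <= part (conj_part mu) k.+1) = (t <= part mu k.+1).
  move=> t_gt0; rewrite leq_part_conj //.
  by have := mu_sym t k.+1; rewrite /in_diag /= t_gt0 k_lt.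
change (part (conj_part mu) k.+1 = part mu k.+1).
apply/eqP; rewrite eqn_leq; apply/andP; split.
  by have [->|conj_gt0] := posnP (part (conj_part mu) k.+1); rewrite // -le_conj.
by have [->|mu_gt0] := posnP (part mu k.+1); rewrite // le_conj.
Qed.

Lemma size_take_drop (T : Type) (R : seq T) n s :
  size (take n (drop s R)) = minn n (size R - s).
Proof. by rewrite size_take size_drop /minn; case: ltnP. Qed.

Lemma last_take_drop (T : Type) (x0 : T) (R : seq T) n s : 0 < n -> s < size R ->
  last x0 (take n (drop s R)) = nth x0 R (minn (s + n) (size R)).-1.
Proof.
move=> n_gt0 s_lt; rewrite -nth_last nth_take size_take_drop; last lia.
by rewrite nth_drop; congr nth; lia.
Qed.

Section Windows.
Variables (T : eqType) (x0 : T) (R : seq T) (n s : nat).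

Lemma mem_take_drop x : x \in take n (drop s R) ->
  exists q, [/\ s <= q < s + n, q < size R & x = nth x0 R q].
Proof.
move=> x_in; have := index_mem x (take n (drop s R)); rewrite x_in size_take_drop.
move=> idx_lt; exists (s + index x (take n (drop s R))); split; try lia.
by rewrite -nth_drop -(@nth_take n) ?nth_index //; lia.
Qed.

Lemma nth_mem_take_drop q : s <= q < s + n -> q < size R ->
  nth x0 R q \in take n (drop s R).
Proof.
move=> q_in q_lt; have -> : nth x0 R q = nth x0 (take n (drop s R)) (q - s).
  by rewrite nth_take ?nth_drop ?subnKC //; lia.
by rewrite mem_nth // size_take_drop; lia.
Qed.

Lemma take_drop_next q : s <= q < s + n -> q.+1 < size R ->
  nth x0 R q.+1 \in take n (drop s R) \/
  s + n = q.+1 /\ last x0 (take n (drop s R)) = nth x0 R q.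
Proof.
move=> q_in q_lt; have [lt_q1|ge_q1] := ltnP q.+1 (s + n).
  by left; apply: nth_mem_take_drop => //; lia.
by right; split; [lia | rewrite last_take_drop; [congr nth|..]; lia].
Qed.

End Windows.

Definition rim_width lam i := (part lam i).+1 - maxn 1 (part lam i.+1).

Definition rim_row lam i : seq (nat * nat) :=
  [seq (i, j) | j <- rev (iota (maxn 1 (part lam i.+1)) (rim_width lam i))].

Definition rim_shape lam := [seq rim_width lam i | i <- iota 1 (size lam)].

(* The 0-based label of a rim node: each step along the rim moves one column
   left or one row down. *)
Definition rim_pos lam (x : nat * nat) := part lam 1 + x.1 - 1 - x.2.

Definition row_start lam i := rim_pos lam (i, part lam i).

Lemma rimE lam : rim lam = flatten [seq rim_row lam i | i <- iota 1 (size lam)].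
Proof. by []. Qed.

Lemma shape_rim_rows lam :
  shape [seq rim_row lam i | i <- iota 1 (size lam)] = rim_shape lam.
Proof.
rewrite /shape -map_comp; apply: eq_map => i /=.
by rewrite size_map size_rev size_iota.
Qed.

Lemma in_rimE lam (x : nat * nat) : in_rim lam x =
  [&& 0 < x.1, x.1 <= size lam, maxn 1 (part lam x.1.+1) <= x.2 & x.2 <= part lam x.1].
Proof.
case: x => i j; rewrite /in_rim /in_diag /=.
have [lt_i_lam|le_lam_i] := ltnP i (size lam); first lia.
by rewrite (@part_oversize lam i.+1) //; lia.
Qed.

Lemma nth_rim_row lam i c : is_partition lam -> 0 < i <= size lam ->
  c < rim_width lam i -> nth (0, 0) (rim_row lam i) c = (i, part lam i - c).
Proof.
move=> lam_part i_in c_lt; rewrite /rim_row (nth_map 0) ?size_rev ?size_iota //.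
rewrite nth_rev ?size_iota // nth_iota; last by move: c_lt; rewrite /rim_width; lia.
have := part_pos lam_part i_in; have := part_nonincr lam_part (leqnSn i).
by move: c_lt; rewrite /rim_width => *; congr pair; lia.
Qed.

Lemma sumn_take_rim_shape lam r : is_partition lam -> r < size lam ->
  sumn (take r (rim_shape lam)) = row_start lam r.+1.
Proof.
rewrite /row_start /rim_pos /= => lam_part.
elim: r => [|r IH] lt_r_lam; first by rewrite take0 /=; lia.
rewrite (take_nth 0) ?size_map ?size_iota; last lia.
rewrite sumn_rcons IH; last lia.
rewrite (nth_map 0) ?size_iota; last lia.
rewrite nth_iota; last lia.
rewrite /rim_width add1n.
have := part_pos lam_part (i := r.+2); have := part_nonincr lam_part (leqnSn r.+1).
have := part_le_head r.+1 lam_part; lia.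
Qed.

Lemma nth_rim lam q : is_partition lam -> q < size (rim lam) ->
  in_rim lam (nth (0, 0) (rim lam) q) /\ rim_pos lam (nth (0, 0) (rim lam) q) = q.
Proof.
move=> lam_part q_lt; move: (q_lt); rewrite rimE size_flatten shape_rim_rows => q_lt_sum.
rewrite nth_flatten shape_rim_rows.
set i := reshape_index _ q; set c := reshape_offset _ q.
have i_lt : i < size (rim_shape lam) by apply: reshape_indexP.
have c_lt : c < nth 0 (rim_shape lam) i by apply: reshape_offsetP.
have q_eq : q = flatten_index (rim_shape lam) i c by rewrite reshape_indexK.
move: i_lt c_lt q_eq; rewrite size_map size_iota => i_lt.
rewrite (nth_map 0) ?size_iota // nth_iota // add1n.
rewrite /rim_shape (nth_map 0) ?size_iota // nth_iota // add1n => c_lt.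
rewrite /flatten_index sumn_take_rim_shape // nth_rim_row //.
rewrite in_rimE /row_start /rim_pos /= => ->.
have := part_pos lam_part (i := i.+1); have := part_nonincr lam_part (leqnSn i.+1).
have := part_le_head i.+1 lam_part; move: c_lt; rewrite /rim_width.
lia.
Qed.

Lemma nth_rim_pos lam x : is_partition lam -> in_rim lam x ->
  rim_pos lam x < size (rim lam) /\ nth (0, 0) (rim lam) (rim_pos lam x) = x.
Proof.
case: x => [[|i] j] lam_part; rewrite in_rimE //= => /and3P[i_lt j_ge j_le].
have width_i : nth 0 (rim_shape lam) i = rim_width lam i.+1.
  by rewrite (nth_map 0) ?size_iota ?nth_iota ?add1n //; lia.
have c_lt : part lam i.+1 - j < nth 0 (rim_shape lam) i.
  by rewrite width_i /rim_width; lia.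
have pos_eq : rim_pos lam (i.+1, j) = flatten_index (rim_shape lam) i (part lam i.+1 - j).
  rewrite /flatten_index sumn_take_rim_shape // /row_start /rim_pos /=.
  by have := part_le_head i.+1 lam_part; lia.
rewrite pos_eq; split.
  by rewrite rimE size_flatten shape_rim_rows; apply: flatten_indexP.
rewrite rimE nth_flatten shape_rim_rows flatten_indexKl // flatten_indexKr //.
rewrite (nth_map 0) ?size_iota ?nth_iota ?add1n // nth_rim_row -?width_i //.
by congr pair; lia.
Qed.

Lemma in_rim_row_start lam i : is_partition lam -> 0 < i <= size lam ->
  in_rim lam (i, part lam i).
Proof.
move=> lam_part i_in; rewrite in_rimE /=.
by have := part_pos lam_part i_in; have := part_nonincr lam_part (leqnSn i); lia.
Qed.

Lemma nth_rim_inj lam q1 q2 : is_partition lam ->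
  q1 < size (rim lam) -> q2 < size (rim lam) ->
  nth (0, 0) (rim lam) q1 = nth (0, 0) (rim lam) q2 -> q1 = q2.
Proof.
move=> lam_part /(nth_rim lam_part) [_ pos1] /(nth_rim lam_part) [_ pos2] eq_nth.
by rewrite -pos1 -pos2 eq_nth.
Qed.

Lemma find_rim_row lam i : is_partition lam -> 0 < i <= size lam ->
  find (fun x : nat * nat => x.1 == i) (rim lam) = row_start lam i.
Proof.
move=> lam_part i_in; set f := find _ _.
have [start_lt start_nth] := nth_rim_pos lam_part (in_rim_row_start lam_part i_in).
have [lt_f|] := ltnP f (row_start lam i).
  have f_lt : f < size (rim lam) by apply: ltn_trans start_lt.
  have has_i : has (fun x : nat * nat => x.1 == i) (rim lam) by rewrite has_find.
  have /eqP f_row := nth_find (0, 0) has_i.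
  have [f_rim f_pos] := nth_rim lam_part f_lt.
  move: f_rim f_pos lt_f; rewrite /row_start /rim_pos.
  case: (nth (0, 0) (rim lam) f) f_row => a b /= ->.
  rewrite in_rimE /= => /and4P[_ _ _ le_b] f_pos.
  by have := part_le_head i lam_part; lia.
rewrite leq_eqVlt => /orP[/eqP -> //|lt_start].
by have := before_find (0, 0) lt_start; rewrite start_nth /= eqxx.
Qed.

Definition p_segment p lam r := take p (drop (row_start lam r) (rim lam)).

Lemma row_start1 lam : row_start lam 1 = 0.
Proof. by rewrite /row_start /rim_pos /=; lia. Qed.

Lemma rim_pos_lt_row_start lam x : is_partition lam -> in_rim lam x ->
  x.1 < size lam -> rim_pos lam x < row_start lam x.1.+1.
Proof.
case: x => a b lam_part; rewrite in_rimE /row_start /rim_pos /=.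
move=> /and4P[a_gt0 _ le_b b_le] _.
by have := part_le_head a lam_part; lia.
Qed.

Lemma mem_prim_aux p lam fuel r0 x : is_partition lam -> 0 < r0 <= size lam ->
  x \in prim_aux p lam fuel (row_start lam r0) ->
  exists2 r, 0 < r <= size lam & x \in p_segment p lam r /\
    {subset p_segment p lam r <= prim_aux p lam fuel (row_start lam r0)}.
Proof.
move=> lam_part; elim: fuel r0 => [|fuel IH] r0 //= r0_in.
rewrite -/(p_segment p lam r0).
case Eseg: (p_segment p lam r0) => [|y ys] //; rewrite -Eseg.
set a := (last (0, 0) (p_segment p lam r0)).1.
case: ifP => [_ x_seg|last_row]; first by exists r0 => //; split => // z.
rewrite mem_cat => /orP[x_seg|x_rec].
  by exists r0 => //; split => // z z_seg; rewrite mem_cat z_seg.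
have a_lt : a < size lam by rewrite ltnNge last_row.
have a1_in : 0 < a.+1 <= size lam by lia.
move: x_rec; rewrite find_rim_row // => /IH [] // r r_in [x_seg sub_rec].
by exists r => //; split => // z /sub_rec z_rec; rewrite mem_cat z_rec orbT.
Qed.

Lemma head_mem_prim_aux p lam fuel s : 0 < p -> s < size (rim lam) ->
  nth (0, 0) (rim lam) s \in prim_aux p lam fuel.+1 s.
Proof.
move=> p_gt0 s_lt /=.
have s_seg : nth (0, 0) (rim lam) s \in take p (drop s (rim lam)).
  by apply: nth_mem_take_drop => //; lia.
case Eseg: (take p (drop s (rim lam))) s_seg => [|y ys] //; rewrite -Eseg => s_seg.
by case: ifP => _ //; rewrite mem_cat s_seg.
Qed.

Lemma prim_aux_row_start p lam fuel s i : is_partition lam -> 0 < p ->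
  size (rim lam) < s + fuel -> 1 < i <= size lam ->
  (i.-1, part lam i) \in prim_aux p lam fuel s -> (i, part lam i) \in prim_aux p lam fuel s.
Proof.
move=> lam_part p_gt0; elim: fuel s => [|fuel IH] s // fuel_big i_in /=.
set seg := take p (drop s (rim lam)).
case Eseg: seg => [|y ys] //; rewrite -Eseg.
have s_lt : s < size (rim lam).
  have : 0 < size seg by rewrite Eseg.
  by rewrite size_take_drop; lia.
have prev_rim : in_rim lam (i.-1, part lam i).
  rewrite in_rimE /= prednK; last lia.
  by have := part_pos lam_part (i := i); have := part_nonincr lam_part (leq_pred i); lia.
have i_row : 0 < i <= size lam by lia.
have [start_lt start_nth] := nth_rim_pos lam_part (in_rim_row_start lam_part i_row).
have [prev_lt prev_nth] := nth_rim_pos lam_part prev_rim.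
set q := rim_pos lam _ in prev_lt prev_nth.
have start_eq : row_start lam i = q.+1.
  by rewrite /q /row_start /rim_pos /=; have := part_le_head i lam_part; lia.
rewrite /row_start -/(row_start lam i) start_eq in start_lt start_nth.
have seg_next : (i.-1, part lam i) \in seg ->
    (i, part lam i) \in seg \/ s + p = q.+1 /\ last (0, 0) seg = (i.-1, part lam i).
  rewrite -{1}prev_nth -start_nth -prev_nth.
  case/(mem_take_drop (0, 0)) => q' [q'_in q'_lt].
  by move/(nth_rim_inj lam_part prev_lt q'_lt) => q_eq; subst q'; apply: take_drop_next.
case: ifP => [last_row /seg_next [] // [_ last_eq]|not_last_row].
  by move: last_row; rewrite last_eq /=; lia.
rewrite !mem_cat => /orP[/seg_next [->//|[s_eq last_eq]]|prev_rec].
  rewrite last_eq /= prednK; last lia.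
  rewrite find_rim_row // start_eq.
  case: fuel {IH} fuel_big => [|fuel] fuel_big; first lia.
  by rewrite -start_nth head_mem_prim_aux ?orbT.
have a_lt : (last (0, 0) seg).1 < size lam by rewrite ltnNge not_last_row.
have next_in : 0 < (last (0, 0) seg).1.+1 <= size lam by [].
have last_idx : (minn (s + p) (size (rim lam))).-1 < size (rim lam) by lia.
have [last_rim last_pos] := nth_rim lam_part last_idx.
rewrite -(last_take_drop _ p_gt0 s_lt) -/seg in last_rim last_pos.
have := rim_pos_lt_row_start lam_part last_rim a_lt; rewrite last_pos => next_gt.
rewrite find_rim_row // in prev_rec *.
by rewrite IH ?orbT //; lia.
Qed.

Lemma mem_p_rim p lam x : is_partition lam -> x \in p_rim p lam ->
  exists2 r, 0 < r <= size lam &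
    x \in p_segment p lam r /\ {subset p_segment p lam r <= p_rim p lam}.
Proof.
move=> lam_part x_rim; have lam_gt0 : 0 < size lam by case: lam lam_part x_rim.
have := @mem_prim_aux p lam (size (rim lam)).+1 1 x lam_part.
by rewrite row_start1 lam_gt0; apply.
Qed.

Lemma p_rim_row_start p lam i : is_partition lam -> 0 < p -> 1 < i <= size lam ->
  (i.-1, part lam i) \in p_rim p lam -> (i, part lam i) \in p_rim p lam.
Proof. by move=> lam_part p_gt0 i_in; apply: prim_aux_row_start. Qed.

Lemma mem_rim lam x : is_partition lam -> (x \in rim lam) = in_rim lam x.
Proof.
move=> lam_part; apply/idP/idP => [x_rim|/(nth_rim_pos lam_part) [lt_pos <-]].
  have idx_lt : index x (rim lam) < size (rim lam) by rewrite index_mem.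
  by have [] := nth_rim lam_part idx_lt; rewrite nth_index.
exact: mem_nth.
Qed.

Lemma in_rim_p_rim p lam x : is_partition lam -> x \in p_rim p lam -> in_rim lam x.
Proof.
move=> lam_part /(mem_p_rim lam_part) [r _ [x_seg _]].
by rewrite -mem_rim // (mem_drop (mem_take x_seg)).
Qed.

Lemma in_rimstarC p lam a b : in_rimstar p lam (a, b) = in_rimstar p lam (b, a).
Proof. by rewrite /in_rimstar orbC. Qed.

Lemma in_rimstar_upper p lam a b : a <= b ->
  in_rimstar p lam (a, b) = ((a, b) \in p_rim p lam).
Proof.
move=> le_ab; rewrite /in_rimstar /in_U /= le_ab andbT.
have [le_ba|lt_ab] := leqP b a; last by rewrite andbF orbF.
have eq_ab : a = b by lia.
by rewrite eq_ab andbT orbb.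
Qed.

Definition in_trimmed p lam x := in_diag lam x && ~~ in_rimstar p lam x.

Section Trimmed.
Variables (p : nat) (lam : seq nat).
Hypotheses (p_gt0 : 0 < p) (lam_part : is_partition lam).

Lemma in_trimmed_up a b : 1 < a <= b ->
  in_trimmed p lam (a, b) -> in_trimmed p lam (a.-1, b).
Proof.
case: a => [|a] //= ab_in /andP[ab_diag ab_out].
have a_diag : in_diag lam (a, b).
  by move: ab_diag; rewrite /in_diag /=; have := part_nonincr lam_part (leqnSn a); lia.
rewrite /in_trimmed a_diag /= in_rimstar_upper; last lia.
apply: contra ab_out => a_rim; rewrite in_rimstar_upper; last lia.
have := in_rim_p_rim lam_part a_rim; move: ab_diag.
rewrite /in_rim /in_diag /= => ab_diag a_end.
have b_eq : b = part lam a.+1 by lia.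
by rewrite b_eq in a_rim *; apply: p_rim_row_start => //; lia.
Qed.

Lemma in_trimmed_left a b : a < b ->
  in_trimmed p lam (a, b) -> in_trimmed p lam (a, b.-1).
Proof.
case: b => [|b] //= lt_ab /andP[ab_diag ab_out].
have b_diag : in_diag lam (a, b) by move: ab_diag; rewrite /in_diag /=; lia.
rewrite /in_trimmed b_diag /= in_rimstar_upper; last lia.
apply: contra ab_out => b_rim; rewrite in_rimstar_upper; last lia.
have [r r_in [b_seg seg_sub]] := mem_p_rim lam_part b_rim.
have [q [q_in q_lt b_nth]] := mem_take_drop (0, 0) b_seg.
have ab_rim : in_rim lam (a, b.+1).
  by move: (in_rim_p_rim lam_part b_rim) ab_diag; rewrite !in_rimE /in_diag /=; lia.
have [ab_lt ab_nth] := nth_rim_pos lam_part ab_rim.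
have [_ b_pos] := nth_rim lam_part q_lt; rewrite -b_nth in b_pos.
have start_nth : nth (0, 0) (rim lam) (row_start lam r) = (r, part lam r).
  exact: (nth_rim_pos lam_part (in_rim_row_start lam_part r_in)).2.
have q_ne : q != row_start lam r.
  apply: contraTneq ab_diag => q_eq; move: start_nth b_nth.
  rewrite -q_eq => -> [-> ->]; rewrite /in_diag /=; lia.
apply: seg_sub; rewrite -ab_nth; apply: nth_mem_take_drop => //.
by move: b_pos; rewrite /rim_pos /=; lia.
Qed.

Lemma trimmed_row_end i m : 0 < i <= m ->
  in_trimmed p lam (i, m) -> ~~ in_trimmed p lam (i, m.+1) ->
  exists2 r, 0 < r <= part lam r &
    part lam r - r = m - i \/ part lam r - r = m - i + p.
Proof.
move=> im_in /andP[im_diag im_out] next_out.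
have i_le : i <= size lam by move: im_diag; rewrite /in_diag /=; lia.
have [lt_m|ge_m] := ltnP m (part lam i); last first.
  by exists i; [|left]; move: im_diag; rewrite /in_diag /=; lia.
have next_diag : in_diag lam (i, m.+1) by rewrite /in_diag /=; lia.
rewrite /in_trimmed next_diag negbK in_rimstar_upper in next_out; last lia.
have [lt_m1|ge_m1] := ltnP m (part lam i.+1).
  have := in_rim_p_rim lam_part next_out; rewrite in_rimE /= => next_rim.
  by exists i.+1; [|left]; lia.
rewrite in_rimstar_upper in im_out; last lia.
have [r r_in [next_seg seg_sub]] := mem_p_rim lam_part next_out.
have [q [q_in q_lt next_nth]] := mem_take_drop (0, 0) next_seg.
have im_rim : in_rim lam (i, m) by rewrite in_rimE /=; lia.
have [im_lt im_nth] := nth_rim_pos lam_part im_rim.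
have [_ next_pos] := nth_rim lam_part q_lt; rewrite -next_nth in next_pos.
have im_pos : rim_pos lam (i, m) = q.+1.
  by move: next_pos; rewrite /rim_pos /=; have := part_le_head i lam_part; lia.
have q1_out : ~~ (q.+1 < row_start lam r + p).
  apply: contra im_out => q1_lt; apply: seg_sub; rewrite -im_nth im_pos.
  by apply: nth_mem_take_drop; rewrite -?im_pos //; lia.
exists r; [|right]; move: q_in q1_out im_pos; rewrite /row_start /rim_pos /=;
  have := part_le_head i lam_part; have := part_le_head r lam_part; lia.
Qed.

Hypothesis lam_sc : self_conjugate lam.

Lemma in_trimmedC a b : in_trimmed p lam (a, b) = in_trimmed p lam (b, a).
Proof. by rewrite /in_trimmed in_diag_sym // in_rimstarC. Qed.

Lemma in_trimmed_bound i j : in_trimmed p lam (i, j) ->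
  (0 < i <= size lam) && (0 < j <= size lam).
Proof.
case/andP=> ij_diag _; move: (ij_diag); rewrite in_diag_sym // /in_diag /=.
by move: ij_diag; rewrite /in_diag /=; lia.
Qed.

Lemma in_trimmed_row_closed i j : 0 < i ->
  in_trimmed p lam (i.+1, j) -> in_trimmed p lam (i, j).
Proof.
move=> i_gt0 ij_in; have [le_ij|lt_ji] := leqP i.+1 j.
  by apply: (in_trimmed_up (a := i.+1)) => //; rewrite ltnS i_gt0.
by rewrite in_trimmedC; apply: (in_trimmed_left (b := i.+1)); rewrite // in_trimmedC.
Qed.

Lemma in_trimmed_col_closed i j : 0 < j ->
  in_trimmed p lam (i, j.+1) -> in_trimmed p lam (i, j).
Proof.
move=> j_gt0 ij_in; rewrite in_trimmedC.
by apply: in_trimmed_row_closed; rewrite // in_trimmedC.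
Qed.

Lemma trimmed_partition :
  exists2 mu, is_partition mu & in_diag mu =1 in_trimmed p lam.
Proof.
apply: (exists_partition_diag (B := size lam)) => [i j|i j|i j].
- exact: in_trimmed_bound.
- exact: in_trimmed_row_closed.
- exact: in_trimmed_col_closed.
Qed.

End Trimmed.

Theorem lemma3p22 (p : nat) (lam : seq nat) :
  prime p -> odd p -> lam != [::] -> BG p lam ->
  exists mu : seq nat,
    [/\ is_partition mu,
        (forall x : nat * nat, in_diag mu x = in_diag lam x && ~~ in_rimstar p lam x)
      & BG p mu].
Proof.
move=> /prime_gt0 p_gt0 _ _ [lam_part lam_sc lam_hooks].
have [mu mu_part mu_diag] := trimmed_partition p_gt0 lam_part lam_sc.
have mu_sc : self_conjugate mu.
  by apply: self_conjugate_sym => // i j; rewrite !mu_diag in_trimmedC.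
exists mu; split => //; split => //.
apply/(BG_diag_hooksP p mu_part mu_sc) => i i_in; case/andP: (i_in) => i_gt0 le_i.
have i_le : i <= size mu.
  by rewrite leqNgt; apply: contraTN le_i => /part_oversize ->; rewrite -ltnNge.
have end_in : in_trimmed p lam (i, part mu i).
  by rewrite -mu_diag /in_diag /= i_le leqnn andbT; lia.
have past_out : ~~ in_trimmed p lam (i, (part mu i).+1).
  by rewrite -mu_diag /in_diag /= ltnn !andbF.
have [r r_in hook_r] := trimmed_row_end p_gt0 lam_part i_in end_in past_out.
have := (BG_diag_hooksP p lam_part lam_sc).1 lam_hooks r r_in.
by case: hook_r => ->; rewrite // mulnDr addnAC dvdn_addl // dvdn_mull.
Qed.
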